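(* Let $f\in\mathcal{H}^2_{\omega}$. For an integer $k\geq1$ and $\lambda\in\mathbb{C}$ put $g_{k,\lambda}(z)=z^k+\lambda$. The following are equivalent: (i) $f$ is $\mathcal{H}^2_{\omega}$-inner; (ii) $\|f\|=1$ and for every integer $k\geq 1$ at least one of the following holds: (C1) there is a constant $C_k$ with $\|fg_{k,\lambda}\|^2\leq C_k+|\lambda|^2$ for all $\lambda\in\mathbb{C}$; (C2) there is a constant $D_k$ with $\|fg_{k,\lambda}\|^2\geq D_k+|\lambda|^2$ for all $\lambda\in\mathbb{C}$; (iii) $\|f\|=1$ and $|p(0)|\leq\|pf\|$ for every polynomial $p\in\mathbb{C}[z]$.
   Context: Let $\omega=\{\omega_n\}_{n\geq 0}$ be a sequence of positive reals with $\omega_0=1$ and $\lim_{n\to\infty}\omega_{n+1}/\omega_n=1$. $\mathcal{H}^2_{\omega}$ is the Hilbert space of power series $f(z)=\sum_{n\ge0}a_nz^n$ with $\|f\|^2=\sum_{n\geq0}\omega_n|a_n|^2<\infty$ and inner product $\langle f,g\rangle=\sum_n\omega_na_n\overline{b_n}$ for $g=\sum b_nz^n$; its elements are holomorphic on the unit disk $\mathbb{D}$. A function $f\in\mathcal{H}^2_{\omega}$ is $\mathcal{H}^2_{\omega}$-inner if $\|f\|=1$ and $\langle z^mf,f\rangle=0$ for all integers $m\geq1$. *)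

From Stdlib Require Import Reals Lra List.
Open Scope R_scope.

Definition Cpx : Type := (R * R)%type.
Definition C0 : Cpx := (0, 0).
Definition C1 : Cpx := (1, 0).
Definition Cadd (z w : Cpx) : Cpx := (fst z + fst w, snd z + snd w).
Definition Cmul (z w : Cpx) : Cpx :=
  (fst z * fst w - snd z * snd w, fst z * snd w + snd z * fst w).
Definition Cconj (z : Cpx) : Cpx := (fst z, - snd z).
Definition Cnorm2 (z : Cpx) : R := fst z ^ 2 + snd z ^ 2.
Definition Cmod (z : Cpx) : R := sqrt (Cnorm2 z).

(* Power series are represented by their coefficient sequences nat -> Cpx. *)

Definition weight (w : nat -> R) : Prop :=
  (forall n, 0 < w n) /\ w 0%nat = 1 /\ Un_cv (fun n => w (S n) / w n) 1.

Definition norm2_is (w : nat -> R) (a : nat -> Cpx) (l : R) : Prop :=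
  infinite_sum (fun n => w n * Cnorm2 (a n)) l.

Definition in_H2 (w : nat -> R) (a : nat -> Cpx) : Prop :=
  exists l, norm2_is w a l.

Definition inner_is (w : nat -> R) (a b : nat -> Cpx) (l : Cpx) : Prop :=
  infinite_sum (fun n => w n * fst (Cmul (a n) (Cconj (b n)))) (fst l) /\
  infinite_sum (fun n => w n * snd (Cmul (a n) (Cconj (b n)))) (snd l).

(* coefficients of z^m f *)
Definition shift (m : nat) (a : nat -> Cpx) (n : nat) : Cpx :=
  if Nat.ltb n m then C0 else a (n - m)%nat.

(* Polynomials as coefficient lists [p_0; p_1; ...; p_d]. *)
Definition cpoly := list Cpx.

Fixpoint polymul (p : cpoly) (a : nat -> Cpx) : nat -> Cpx :=
  match p with
  | nil => fun _ => C0
  | c :: p' => fun n => Cadd (Cmul c (a n)) (shift 1 (polymul p' a) n)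
  end.

Definition peval0 (p : cpoly) : Cpx := hd C0 p.

Definition gkl (k : nat) (lam : Cpx) : cpoly :=
  lam :: (repeat C0 (k - 1) ++ (C1 :: nil)).

Definition is_inner (w : nat -> R) (a : nat -> Cpx) : Prop :=
  norm2_is w a 1 /\
  forall m : nat, (1 <= m)%nat -> inner_is w (shift m a) a C0.

(* Everything reduces to one identity: for q = <z^k f, f>,
   ||(z^k + lam) f||^2 = |lam|^2 ||f||^2 + ||z^k f||^2 + 2 Re(lam * conj q).
   If f is inner, q = 0 and the right side is |lam|^2 + const, giving (C1) and (C2).
   Conversely a real-linear function of lam that is bounded on one side vanishes,
   so either (C1) or (C2) forces q = 0.  For (iii), writing p = p(0) + z p1 and
   using that z^m f is orthogonal to f for every m >= 1 (hence so is z p1 f),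
   ||p f||^2 = |p(0)|^2 + ||z p1 f||^2 >= |p(0)|^2; conversely (iii) applied to
   g_{k,lam} is (C2) with D_k = 0. *)
From Coquelicot Require Import Coquelicot.
From Stdlib Require Import Reals List Lra Lia Psatz FunctionalExtensionality.
Open Scope R_scope.

Lemma infinite_sum_ext u v l :
  (forall n, u n = v n) -> infinite_sum u l -> infinite_sum v l.
Proof.
  intros Huv Hu. replace v with u; auto. apply functional_extensionality; auto.
Qed.

Lemma infinite_sum_plus u v lu lv : infinite_sum u lu -> infinite_sum v lv ->
  infinite_sum (fun n => u n + v n) (lu + lv).
Proof.
  intros Hu Hv. apply is_series_Reals in Hu, Hv. apply is_series_Reals.
  exact (is_series_plus _ _ _ _ Hu Hv).
Qed.

Lemma infinite_sum_scal u lu x : infinite_sum u lu ->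
  infinite_sum (fun n => x * u n) (x * lu).
Proof.
  intros Hu. apply is_series_Reals in Hu. apply is_series_Reals.
  exact (is_series_scal x _ _ Hu).
Qed.

Lemma infinite_sum_lincomb4 (u v t r s : nat -> R) lu lv lt lr x y z l :
  infinite_sum u lu -> infinite_sum v lv -> infinite_sum t lt -> infinite_sum r lr ->
  (forall n, s n = x * u n + y * v n + z * t n + r n) ->
  l = x * lu + y * lv + z * lt + lr -> infinite_sum s l.
Proof.
  intros Hu Hv Ht Hr Hs ->.
  apply (infinite_sum_ext (fun n => x * u n + y * v n + z * t n + r n)); auto.
  repeat apply infinite_sum_plus; auto; apply infinite_sum_scal; auto.
Qed.

Lemma infinite_sum_0 : infinite_sum (fun _ => 0) 0.
Proof.
  intros eps Heps. exists 0%nat. intros n _.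
  replace (sum_f_R0 (fun _ => 0) n) with 0
    by (induction n as [|n IH]; simpl; [|rewrite <- IH]; lra).
  unfold R_dist. rewrite Rminus_0_r, Rabs_R0. lra.
Qed.

Lemma infinite_sum_ge0 s l : (forall n, 0 <= s n) -> infinite_sum s l -> 0 <= l.
Proof.
  intros Hs Hl. destruct (Rle_lt_dec 0 l) as [|Hneg]; auto.
  destruct (Hl (- l)) as [N HN]; [lra|].
  specialize (HN N (le_n _)). pose proof (cond_pos_sum s N Hs).
  unfold R_dist in HN. rewrite Rabs_right in HN; lra.
Qed.

Lemma in_H2_ex_series w a : in_H2 w a <-> ex_series (fun n => w n * Cnorm2 (a n)).
Proof. split; intros [l Hl]; exists l; apply is_series_Reals; auto. Qed.

Lemma Cnorm2_ge0 z : 0 <= Cnorm2 z.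
Proof. unfold Cnorm2. nra. Qed.

Lemma Cmul_conj_bound b a :
  Rabs (fst (Cmul b (Cconj a))) <= Cnorm2 b + Cnorm2 a /\
  Rabs (snd (Cmul b (Cconj a))) <= Cnorm2 b + Cnorm2 a.
Proof.
  destruct b as [b1 b2], a as [a1 a2]; unfold Cnorm2, Cmul, Cconj; simpl.
  pose proof (pow2_ge_0 (b1 - a1)); pose proof (pow2_ge_0 (b1 + a1)).
  pose proof (pow2_ge_0 (b2 - a2)); pose proof (pow2_ge_0 (b2 + a2)).
  pose proof (pow2_ge_0 (b1 - a2)); pose proof (pow2_ge_0 (b1 + a2)).
  pose proof (pow2_ge_0 (b2 - a1)); pose proof (pow2_ge_0 (b2 + a1)).
  split; apply Rabs_le; split; nra.
Qed.

Lemma norm2_is_ge0 w a l : weight w -> norm2_is w a l -> 0 <= l.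
Proof.
  intros [Hpos _]. apply infinite_sum_ge0. intros n.
  apply Rmult_le_pos; [apply Rlt_le, Hpos | apply Cnorm2_ge0].
Qed.

Lemma norm2_is_C0 w : norm2_is w (fun _ => C0) 0.
Proof.
  apply (infinite_sum_ext (fun _ => 0)); [|exact infinite_sum_0].
  intros n. unfold Cnorm2; simpl. ring.
Qed.

Lemma inner_is_unique w b a I J : inner_is w b a I -> inner_is w b a J -> I = J.
Proof.
  destruct I, J. intros [H1 H2] [H3 H4]. simpl in *.
  rewrite (uniqueness_sum _ _ _ H1 H3), (uniqueness_sum _ _ _ H2 H4). reflexivity.
Qed.

Lemma inner_is_exists w b a : weight w -> in_H2 w b -> in_H2 w a ->
  exists I, inner_is w b a I.
Proof.
  intros [Hpos _] Hb Ha. apply in_H2_ex_series in Hb, Ha.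
  assert (Hsum : ex_series (fun n => plus (w n * Cnorm2 (b n)) (w n * Cnorm2 (a n))))
    by exact (ex_series_plus (V := R_NormedModule) _ _ Hb Ha).
  assert (Hdom : forall proj : Cpx -> R,
    (forall n, Rabs (proj (Cmul (b n) (Cconj (a n)))) <= Cnorm2 (b n) + Cnorm2 (a n)) ->
    ex_series (fun n => w n * proj (Cmul (b n) (Cconj (a n))))).
  { intros proj Hproj. apply (@ex_series_le _ R_CompleteNormedModule) with (2 := Hsum).
    intros n. change (Rabs (w n * proj (Cmul (b n) (Cconj (a n))))
      <= w n * Cnorm2 (b n) + w n * Cnorm2 (a n)).
    rewrite Rabs_mult, Rabs_right by (apply Rle_ge, Rlt_le, Hpos).
    rewrite <- Rmult_plus_distr_l.
    apply Rmult_le_compat_l; [apply Rlt_le, Hpos | apply Hproj]. }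
  destruct (Hdom fst (fun n => proj1 (Cmul_conj_bound (b n) (a n)))) as [l1 H1].
  destruct (Hdom snd (fun n => proj2 (Cmul_conj_bound (b n) (a n)))) as [l2 H2].
  exists (l1, l2). split; apply is_series_Reals; auto.
Qed.

Lemma norm2_is_scale_add w a b c A B I :
  norm2_is w a A -> norm2_is w b B -> inner_is w b a I ->
  norm2_is w (fun n => Cadd (Cmul c (a n)) (b n))
    (Cnorm2 c * A + B + 2 * (fst c * fst I + snd c * snd I)).
Proof.
  intros HA HB [H1 H2].
  apply (infinite_sum_lincomb4 _ _ _ _ _ _ _ _ _ (2 * fst c) (2 * snd c) (Cnorm2 c)
           _ H1 H2 HA HB).
  - intros n. unfold Cnorm2, Cadd, Cmul, Cconj; simpl. ring.
  - ring.
Qed.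

Lemma weight_ratio_bounded w : weight w ->
  exists K, 0 < K /\ forall n, w (S n) <= K * w n.
Proof.
  intros [Hpos [_ Hcv]].
  assert (Hinit : forall N, exists K, 0 < K /\
    forall n, (n <= N)%nat -> w (S n) / w n <= K).
  { induction N as [|N [K [HK HKn]]].
    - exists (Rmax 1 (w 1%nat / w 0%nat)). split; [apply Rlt_le_trans with 1; [lra | apply Rmax_l]|].
      intros n Hn. replace n with 0%nat by lia. apply Rmax_r.
    - exists (Rmax K (w (S (S N)) / w (S N))).
      split; [apply Rlt_le_trans with K; [lra | apply Rmax_l]|].
      intros n Hn. destruct (Nat.eq_dec n (S N)) as [->|]; [apply Rmax_r|].
      apply Rle_trans with K; [apply HKn; lia | apply Rmax_l]. }
  destruct (Hcv 1) as [N HN]; [lra|].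
  destruct (Hinit N) as [K [HK HKn]].
  exists (Rmax K 2). split; [apply Rlt_le_trans with 2; [lra | apply Rmax_r]|].
  intros n. assert (Hratio : w (S n) / w n <= Rmax K 2).
  { destruct (Compare_dec.le_lt_dec n N).
    - apply Rle_trans with K; [auto | apply Rmax_l].
    - specialize (HN n ltac:(lia)). unfold R_dist in HN. apply Rabs_def2 in HN.
      apply Rle_trans with 2; [lra | apply Rmax_r]. }
  pose proof (Hpos n).
  apply (Rmult_le_compat_r (w n)) in Hratio; [|lra].
  unfold Rdiv in Hratio. rewrite Rmult_assoc, Rinv_l, Rmult_1_r in Hratio; lra.
Qed.

Lemma shift_ext m (a b : nat -> Cpx) :
  (forall n, a n = b n) -> forall n, shift m a n = shift m b n.
Proof. intros Hab n. unfold shift. destruct (Nat.ltb n m); auto. Qed.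

Lemma shift0 (a : nat -> Cpx) : shift 0 a = a.
Proof.
  apply functional_extensionality. intros n. unfold shift. simpl.
  rewrite Nat.sub_0_r. reflexivity.
Qed.

Lemma shift1_shift j (a : nat -> Cpx) n : shift 1 (shift j a) n = shift (S j) a n.
Proof.
  unfold shift.
  destruct (Nat.ltb_spec n 1); destruct (Nat.ltb_spec n (S j)); try lia; auto;
    destruct (Nat.ltb_spec (n - 1) j); try lia; auto; f_equal; lia.
Qed.

Lemma shift_C0 m n : shift m (fun _ => C0) n = C0.
Proof. unfold shift. destruct (Nat.ltb n m); auto. Qed.

(* The one place the growth condition on the weight is used. *)
Lemma in_H2_shift1 w a : weight w -> in_H2 w a -> in_H2 w (shift 1 a).
Proof.
  intros hw Ha. destruct (weight_ratio_bounded w hw) as [K [HK HKn]].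
  destruct hw as [Hpos _].
  apply in_H2_ex_series in Ha. apply in_H2_ex_series, ex_series_incr_1.
  apply (@ex_series_le _ R_CompleteNormedModule) with (fun n => scal K (w n * Cnorm2 (a n))).
  - intros n. change (Rabs (w (S n) * Cnorm2 (shift 1 a (S n))) <= K * (w n * Cnorm2 (a n))).
    unfold shift; simpl. rewrite Nat.sub_0_r.
    pose proof (Cnorm2_ge0 (a n)). pose proof (HKn n). pose proof (Hpos n).
    pose proof (Hpos (S n)). rewrite Rabs_right by nra. nra.
  - exact (ex_series_scal (V := R_NormedModule) K _ Ha).
Qed.

Lemma in_H2_shift w a k : weight w -> in_H2 w a -> in_H2 w (shift k a).
Proof.
  intros hw Ha. induction k as [|k IH]; [rewrite shift0; exact Ha|].
  replace (shift (S k) a) with (shift 1 (shift k a)).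
  - apply in_H2_shift1; auto.
  - apply functional_extensionality. intros n. apply shift1_shift.
Qed.

Lemma in_H2_polymul w a p : weight w -> in_H2 w a -> in_H2 w (polymul p a).
Proof.
  intros hw [A HA]. induction p as [|c p IH]; [eexists; apply norm2_is_C0|].
  pose proof (in_H2_shift1 w _ hw IH) as [B HB].
  destruct (inner_is_exists w _ a hw (ex_intro _ B HB) (ex_intro _ A HA)) as [I HI].
  eexists. exact (norm2_is_scale_add w a _ c A B I HA HB HI).
Qed.

Ltac Cpx_ext := apply injective_projections; simpl; ring.

Lemma polymul_monomial a j n :
  polymul (repeat C0 j ++ C1 :: nil) a n = shift j a n.
Proof.
  revert n; induction j as [|j IH]; intros n; simpl.
  - rewrite shift_C0, shift0. Cpx_ext.
  - rewrite (shift_ext 1 _ _ IH), shift1_shift. Cpx_ext.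
Qed.

Lemma polymul_gkl a k lam : (1 <= k)%nat ->
  polymul (gkl k lam) a = fun n => Cadd (Cmul lam (a n)) (shift k a n).
Proof.
  intros Hk. destruct k as [|k]; [lia|].
  apply functional_extensionality. intros n. unfold gkl. simpl polymul.
  rewrite Nat.sub_0_r, (shift_ext 1 _ _ (polymul_monomial a k)), shift1_shift.
  reflexivity.
Qed.

Lemma shift_polymul_cons m c p (a : nat -> Cpx) n :
  shift m (polymul (c :: p) a) n =
  Cadd (Cmul c (shift m a n)) (shift (S m) (polymul p a) n).
Proof.
  simpl polymul. rewrite <- (shift1_shift m (polymul p a)). unfold shift.
  repeat match goal with |- context [Nat.ltb ?x ?y] => destruct (Nat.ltb_spec x y) end;
    try lia; try Cpx_ext.
  replace (n - 1 - m)%nat with (n - m - 1)%nat by lia. reflexivity.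
Qed.

Lemma inner_shift_polymul_C0 w a :
  (forall m, (1 <= m)%nat -> inner_is w (shift m a) a C0) ->
  forall p m, (1 <= m)%nat -> inner_is w (shift m (polymul p a)) a C0.
Proof.
  intros Horth p. induction p as [|c p IH]; intros m Hm.
  - split; apply (infinite_sum_ext (fun _ => 0)); try exact infinite_sum_0;
      intros n; simpl; rewrite shift_C0; simpl; ring.
  - destruct (Horth m Hm) as [Re1 Im1]. destruct (IH (S m) ltac:(lia)) as [Re2 Im2].
    split.
    + apply (infinite_sum_lincomb4 _ _ _ _ _ _ _ _ _ (fst c) (- snd c) 0
               _ Re1 Im1 infinite_sum_0 Re2).
      * intros n. rewrite shift_polymul_cons. unfold Cadd, Cmul, Cconj; simpl. ring.
      * simpl; ring.
    + apply (infinite_sum_lincomb4 _ _ _ _ _ _ _ _ _ (fst c) (snd c) 0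
               _ Im1 Re1 infinite_sum_0 Im2).
      * intros n. rewrite shift_polymul_cons. unfold Cadd, Cmul, Cconj; simpl. ring.
      * simpl; ring.
Qed.

Lemma norm2_polymul_ge_peval0 w a : weight w -> norm2_is w a 1 ->
  (forall m, (1 <= m)%nat -> inner_is w (shift m a) a C0) ->
  forall p, exists L, norm2_is w (polymul p a) L /\ Cnorm2 (peval0 p) <= L.
Proof.
  intros hw Ha Horth [|c p].
  - exists 0. split; [apply norm2_is_C0|]. unfold Cnorm2; simpl. lra.
  - pose proof (in_H2_polymul w a p hw (ex_intro _ 1 Ha)) as Hp.
    destruct (in_H2_shift1 w _ hw Hp) as [B HB].
    eexists. split.
    + exact (norm2_is_scale_add w a _ c 1 B C0 Ha HB (inner_shift_polymul_C0 w a Horth p 1 (le_n _))).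
    + pose proof (norm2_is_ge0 w _ _ hw HB). simpl. lra.
Qed.

Lemma norm2_polymul_gkl w a k : weight w -> norm2_is w a 1 -> (1 <= k)%nat ->
  exists N I, norm2_is w (shift k a) N /\ inner_is w (shift k a) a I /\
  forall lam, norm2_is w (polymul (gkl k lam) a)
     (Cnorm2 lam + N + 2 * (fst lam * fst I + snd lam * snd I)).
Proof.
  intros hw Ha Hk.
  destruct (in_H2_shift w a k hw (ex_intro _ 1 Ha)) as [N HN].
  destruct (inner_is_exists w (shift k a) a hw (ex_intro _ N HN) (ex_intro _ 1 Ha))
    as [I HI].
  exists N, I. split; [exact HN | split; [exact HI |]].
  intros lam. rewrite polymul_gkl by auto.
  pose proof (norm2_is_scale_add w a (shift k a) lam 1 N I Ha HN HI) as E.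
  rewrite Rmult_1_r in E. exact E.
Qed.

Lemma linear_bounded_above_eq0 c B : (forall x, x * c <= B) -> c = 0.
Proof.
  intros Hbound. destruct (Req_dec c 0) as [|Hc]; auto.
  specialize (Hbound ((B + 1) / c)). unfold Rdiv in Hbound.
  rewrite Rmult_assoc, Rinv_l in Hbound by auto. lra.
Qed.

Lemma one_sided_bound_inner_C0 w a k N I
  (Hnorm : forall lam, norm2_is w (polymul (gkl k lam) a)
     (Cnorm2 lam + N + 2 * (fst lam * fst I + snd lam * snd I))) :
  ((exists C, forall lam, exists l,
      norm2_is w (polymul (gkl k lam) a) l /\ l <= C + Cnorm2 lam) \/
   (exists D, forall lam, exists l,
      norm2_is w (polymul (gkl k lam) a) l /\ l >= D + Cnorm2 lam)) ->
  I = C0.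
Proof.
  destruct I as [I1 I2]. unfold C0.
  assert (Heval : forall lam l, norm2_is w (polymul (gkl k lam) a) l ->
            l = Cnorm2 lam + N + 2 * (fst lam * I1 + snd lam * I2))
    by (intros lam l Hl; exact (uniqueness_sum _ _ _ Hl (Hnorm lam))).
  intros [[C HC] | [D HD]].
  - assert (2 * I1 = 0 /\ 2 * I2 = 0) as [] by (split;
      apply (linear_bounded_above_eq0 _ (C - N)); intros x;
      [destruct (HC (x, 0)) as [l [Hl Hle]] | destruct (HC (0, x)) as [l [Hl Hle]]];
      rewrite (Heval _ _ Hl) in Hle; simpl in Hle; lra).
    f_equal; lra.
  - assert (2 * I1 = 0 /\ 2 * I2 = 0) as [] by (split;
      apply (linear_bounded_above_eq0 _ (N - D)); intros x;
      [destruct (HD (- x, 0)) as [l [Hl Hge]] | destruct (HD (0, - x)) as [l [Hl Hge]]];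
      rewrite (Heval _ _ Hl) in Hge; simpl in Hge; lra).
    f_equal; lra.
Qed.

Theorem mainTheorem2 (w : nat -> R) (a : nat -> Cpx)
  (hw : weight w) (ha : in_H2 w a) :
  (is_inner w a <->
   (norm2_is w a 1 /\
    forall k : nat, (1 <= k)%nat ->
      (exists Ck : R, forall lam : Cpx,
         exists l, norm2_is w (polymul (gkl k lam) a) l /\ l <= Ck + Cnorm2 lam)
      \/
      (exists Dk : R, forall lam : Cpx,
         exists l, norm2_is w (polymul (gkl k lam) a) l /\ l >= Dk + Cnorm2 lam)))
  /\
  (is_inner w a <->
   (norm2_is w a 1 /\
    forall p : cpoly,
      exists l, norm2_is w (polymul p a) l /\ Cmod (peval0 p) <= sqrt l)).
Proof.
  split; split.
  - intros [Ha Horth]. split; auto. intros k Hk. left.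
    destruct (norm2_polymul_gkl w a k hw Ha Hk) as [N [I [_ [HI Hnorm]]]].
    rewrite (inner_is_unique _ _ _ _ _ HI (Horth k Hk)) in Hnorm.
    exists N. intros lam. eexists. split; [apply Hnorm | simpl; lra].
  - intros [Ha Hbound]. split; auto. intros k Hk.
    destruct (norm2_polymul_gkl w a k hw Ha Hk) as [N [I [_ [HI Hnorm]]]].
    rewrite <- (one_sided_bound_inner_C0 w a k N I Hnorm (Hbound k Hk)). exact HI.
  - intros [Ha Horth]. split; auto. intros p.
    destruct (norm2_polymul_ge_peval0 w a hw Ha Horth p) as [L [HL Hle]].
    exists L. split; auto. apply sqrt_le_1_alt. exact Hle.
  - intros [Ha Hpoly]. split; auto. intros k Hk.
    destruct (norm2_polymul_gkl w a k hw Ha Hk) as [N [I [_ [HI Hnorm]]]].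
    rewrite <- (one_sided_bound_inner_C0 w a k N I Hnorm); [exact HI|].
    right. exists 0. intros lam. destruct (Hpoly (gkl k lam)) as [l [Hl Hle]].
    exists l. split; auto. simpl in Hle. unfold Cmod in Hle.
    pose proof (norm2_is_ge0 w _ _ hw Hl).
    apply sqrt_le_0 in Hle; [lra | apply Cnorm2_ge0 | auto].
Qed.
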